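(* In the two-door cascading memoryless semi-fractional setting, for every $x\in[0,1]$, every real $t\ge0$ and every semi-fractional sequence $\pi$, letting $y=x/(q_2+p_2x)$, $$\mathbb{E}_x[1^t\cdot\pi]=t+\mathbb{E}_{q_1^tx}[\pi],\qquad \mathbb{E}_x[2\cdot\pi]=c+\frac{x}{y}\,\mathbb{E}_y[\pi].$$
   Context: Two cascading memoryless doors with durations: parameters $p_1,p_2\in(0,1)$, $q_1=1-p_1$, $q_2=1-p_2$, and $c>0$. A semi-fractional sequence is an infinite sequence of knocks of the form $1^t$ ($t\ge0$ real) and $2$ (consecutive 1-knocks $1^a1^b$ being identified with $1^{a+b}$). A 1-knock $1^t$ takes $t$ time units and, if door 1 is closed, opens it with probability $1-q_1^t$, independently of everything else. A 2-knock takes $c$ time units and opens door 2 with probability $p_2$ (independently) if door 1 is open at that time, and with probability $0$ otherwise. There is no feedback; the running time is the time at which both doors are open. For $x\in[0,1]$, $\mathbb{E}_x[\pi]$ denotes the expected running time of $\pi$ when started with door 2 closed and door 1 closed with probability $x$ (open with probability $1-x$); $\mathbb{E}[\pi]=\mathbb{E}_1[\pi]$. For a knock $a$ and a sequence $\pi$, $a\cdot\pi$ is the sequence starting with $a$ followed by $\pi$. *)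

From Stdlib Require Import Reals.
From Coquelicot Require Import Coquelicot.
Open Scope R_scope.

(* A knock: [K1 t] is the 1-knock 1^t, [K2] is the 2-knock. *)
Inductive knock : Type := K1 (t : R) | K2.

(* Consecutive 1-knocks are not merged syntactically; every notion
   below is invariant under merging 1^a 1^b = 1^(a+b) (Rpower_plus). *)
Definition kseq := nat -> knock.

Definition semifrac (pi : kseq) : Prop :=
  forall n t, pi n = K1 t -> 0 <= t.

Definition kcons (k : knock) (pi : kseq) : kseq :=
  fun n => match n with O => k | S m => pi m end.

Definition dur (c : R) (k : knock) : R :=
  match k with K1 t => t | K2 => c end.

Definition Dn (c : R) (pi : kseq) (n : nat) : R :=
  sum_f_R0 (fun i => dur c (pi i)) n.

(* Distribution of the state just before knock n (door 2 still closed):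
   (P[door 1 closed, door 2 closed], P[door 1 open, door 2 closed]).
   Initially door 1 closed with probability x, door 2 closed.
   A knock 1^t opens a closed door 1 with probability 1 - q1^t;
   a 2-knock opens door 2 with probability p2 if door 1 is open, else 0.
   Knocks act independently (Markov transitions). *)
Fixpoint st (p1 p2 x : R) (pi : kseq) (n : nat) : R * R :=
  match n with
  | O => (x, 1 - x)
  | S m =>
      let ab := st p1 p2 x pi m in
      match pi m with
      | K1 t => (fst ab * Rpower (1 - p1) t,
                 snd ab + fst ab * (1 - Rpower (1 - p1) t))
      | K2 => (fst ab, snd ab * (1 - p2))
      end
  end.

(* P[running time = Dn n, attained by knock n]: both doors become open
   exactly at the end of knock n. *)
Definition pT (p1 p2 x : R) (pi : kseq) (n : nat) : R :=
  match pi n with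
  | K1 _ => 0
  | K2 => snd (st p1 p2 x pi n) * p2
  end.

(* Expected running time E_x[pi] in [0, +oo]:
   sum_n P[T = Dn n] * Dn n  +  (+oo) * P[door 2 never opens]
   (with the convention 0 * (+oo) = 0 of Rbar_mult). *)
Definition Ex (p1 p2 c x : R) (pi : kseq) : Rbar :=
  Rbar_plus
    (Lim_seq (fun N => sum_f_R0 (fun n => pT p1 p2 x pi n * Dn c pi n) N))
    (Rbar_mult
       (Lim_seq (fun n => fst (st p1 p2 x pi n) + snd (st p1 p2 x pi n)))
       p_infty).

(* The evolution of the (sub-probability) state vector
   (P[door 1 closed, door 2 closed], P[door 1 open, door 2 closed]) is linear
   in the initial vector.  After the first knock the state is
   s * (y, 1 - y): for 1^t this holds with s = 1 and y = q1^t x, for the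
   2-knock with s = q2 + p2 x (door 2 still closed) and y = x / s.  Hence the
   run of k . pi is, from its second knock on, the run of pi from y scaled by
   s and delayed by the duration of k; the run that finishes at the first
   knock (probability 1 - s) also costs exactly that duration.  Passing to the
   limit gives
   E_x[k . pi] = dur k + s E_y[pi], including the +oo contribution of the
   mass that never opens door 2. *)
From Stdlib Require Import Reals Lra.
From Coquelicot Require Import Coquelicot.
Open Scope R_scope.

Lemma Rbar_mult_1_l (e : Rbar) : Rbar_mult 1 e = e.
Proof.
  destruct e as [r| |]; simpl.
  - f_equal; ring.
  - destruct Rle_dec as [h|h]; [destruct Rle_lt_or_eq_dec|]; auto; lra.
  - destruct Rle_dec as [h|h]; [destruct Rle_lt_or_eq_dec|]; auto; lra.
Qed.

Lemma Rbar_mult_pos_p_infty (s : R) : 0 < s -> Rbar_mult s p_infty = p_infty.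
Proof.
  intros Hs. rewrite Rbar_mult_comm. apply is_Rbar_mult_unique.
  apply is_Rbar_mult_p_infty_pos. simpl. lra.
Qed.

Lemma Rbar_plus_scaled_tail (A : Rbar) (d s L : R) :
  Rbar_le 0 A -> 0 < s -> 0 <= L ->
  Rbar_plus (Rbar_plus (d - s * d * L) (Rbar_mult s A)) (Rbar_mult (s * L) p_infty)
  = Rbar_plus d (Rbar_mult s (Rbar_plus A (Rbar_mult L p_infty))).
Proof.
  intros HA Hs HL.
  destruct (Rle_lt_or_eq_dec 0 L HL) as [Lpos|<-].
  - rewrite !Rbar_mult_pos_p_infty by nra.
    destruct A as [a| |]; try contradiction;
      rewrite ?Rbar_mult_pos_p_infty by lra; cbn [Rbar_plus Rbar_plus' Rbar_mult Rbar_mult'];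
      rewrite ?Rbar_mult_pos_p_infty by lra; easy.
  - now rewrite !Rmult_0_r, Rbar_mult_0_l, !Rbar_plus_0_r, Rminus_0_r.
Qed.

Lemma Rpower_unit_interval (q t : R) :
  0 < q <= 1 -> 0 <= t -> 0 < Rpower q t <= 1.
Proof.
  intros Hq Ht. split.
  - apply exp_pos.
  - apply Rle_trans with (Rpower 1 t); [now apply Rle_Rpower_l|].
    unfold Rpower. rewrite ln_1, Rmult_0_r, exp_0. lra.
Qed.

Lemma Dn_nonneg (c : R) (pi : kseq) :
  0 <= c -> semifrac pi -> forall n, 0 <= Dn c pi n.
Proof.
  intros Hc Hpi n. apply cond_pos_sum. intros i.
  unfold dur. destruct (pi i) eqn:E; [exact (Hpi i t E)|exact Hc].
Qed.

Lemma Dn_kcons_S (c : R) (k : knock) (pi : kseq) (n : nat) :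
  Dn c (kcons k pi) (S n) = dur c k + Dn c pi n.
Proof.
  induction n as [|n IH]; [reflexivity|].
  unfold Dn in *.
  change (sum_f_R0 ?f (S (S n))) with (sum_f_R0 f (S n) + f (S (S n))).
  rewrite IH. simpl. ring.
Qed.

Section Shift.

Variables p1 p2 c : R.
Hypothesis hp1 : 0 <= p1 < 1.
Hypothesis hp2 : 0 <= p2 <= 1.
Hypothesis hc : 0 <= c.

Definition survival (x : R) (pi : kseq) (n : nat) : R :=
  fst (st p1 p2 x pi n) + snd (st p1 p2 x pi n).

Definition cost_sum (x : R) (pi : kseq) (N : nat) : R :=
  sum_f_R0 (fun n => pT p1 p2 x pi n * Dn c pi n) N.

Lemma Ex_survival_cost_sum (x : R) (pi : kseq) :
  Ex p1 p2 c x pi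
  = Rbar_plus (Lim_seq (cost_sum x pi)) (Rbar_mult (Lim_seq (survival x pi)) p_infty).
Proof. reflexivity. Qed.

Lemma st_S (x : R) (pi : kseq) (n : nat) :
  st p1 p2 x pi (S n) =
  match pi n with
  | K1 t => (fst (st p1 p2 x pi n) * Rpower (1 - p1) t,
             snd (st p1 p2 x pi n)
             + fst (st p1 p2 x pi n) * (1 - Rpower (1 - p1) t))
  | K2 => (fst (st p1 p2 x pi n), snd (st p1 p2 x pi n) * (1 - p2))
  end.
Proof. reflexivity. Qed.

Lemma st_nonneg (x : R) (pi : kseq) : 0 <= x <= 1 -> semifrac pi ->
  forall n, 0 <= fst (st p1 p2 x pi n) /\ 0 <= snd (st p1 p2 x pi n).
Proof.
  intros Hx Hpi n. induction n as [|n IH]; simpl; [lra|].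
  destruct (pi n) eqn:E; simpl; [|nra].
  pose proof (Rpower_unit_interval (1 - p1) t ltac:(lra) (Hpi n t E)). nra.
Qed.

Lemma pT_nonneg (x : R) (pi : kseq) : 0 <= x <= 1 -> semifrac pi ->
  forall n, 0 <= pT p1 p2 x pi n.
Proof.
  intros Hx Hpi n. unfold pT. destruct (pi n); [lra|].
  pose proof (st_nonneg x pi Hx Hpi n). nra.
Qed.

Lemma survival_0 (x : R) (pi : kseq) : survival x pi 0 = 1.
Proof. unfold survival. simpl. ring. Qed.

Lemma survival_S (x : R) (pi : kseq) (n : nat) :
  survival x pi (S n) = survival x pi n - pT p1 p2 x pi n.
Proof. unfold survival, pT. rewrite st_S. destruct (pi n); simpl; ring. Qed.

Lemma survival_cvg (x : R) (pi : kseq) : 0 <= x <= 1 -> semifrac pi ->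
  exists L, 0 <= L /\ is_lim_seq (survival x pi) L.
Proof.
  intros Hx Hpi.
  assert (Hdecr : forall n, survival x pi (S n) <= survival x pi n).
  { intros n. rewrite survival_S. pose proof (pT_nonneg x pi Hx Hpi n). lra. }
  assert (Hpos : forall n, 0 <= survival x pi n).
  { intros n. unfold survival. pose proof (st_nonneg x pi Hx Hpi n). lra. }
  destruct (ex_finite_lim_seq_decr _ 0 Hdecr Hpos) as [L HL].
  exists L. split; [|exact HL].
  exact (is_lim_seq_le (fun _ => 0) _ 0 L Hpos (is_lim_seq_const 0) HL).
Qed.

Lemma cost_sum_cvg (x : R) (pi : kseq) : 0 <= x <= 1 -> semifrac pi ->
  is_lim_seq (cost_sum x pi) (Lim_seq (cost_sum x pi))
  /\ Rbar_le 0 (Lim_seq (cost_sum x pi)).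
Proof.
  intros Hx Hpi.
  assert (Hterm : forall n, 0 <= pT p1 p2 x pi n * Dn c pi n).
  { intros n. apply Rmult_le_pos; [apply pT_nonneg|apply Dn_nonneg]; auto. }
  assert (Hcvg : is_lim_seq (cost_sum x pi) (Lim_seq (cost_sum x pi))).
  { apply Lim_seq_correct, ex_lim_seq_incr. intros N.
    unfold cost_sum. simpl sum_f_R0 at 2. pose proof (Hterm (S N)). lra. }
  split; [exact Hcvg|].
  exact (is_lim_seq_le (fun _ => 0) _ 0 _ (fun N => cond_pos_sum _ N Hterm)
           (is_lim_seq_const 0) Hcvg).
Qed.

Section FirstKnock.

Variables (k : knock) (pi : kseq) (x y s : R).
Hypothesis first_state : st p1 p2 x (kcons k pi) 1 = (s * y, s * (1 - y)).

Lemma st_kcons_S (n : nat) :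
  st p1 p2 x (kcons k pi) (S n)
  = (s * fst (st p1 p2 y pi n), s * snd (st p1 p2 y pi n)).
Proof.
  induction n as [|n IH]; [exact first_state|].
  rewrite st_S. change (kcons k pi (S n)) with (pi n).
  rewrite IH, (st_S y pi n). destruct (pi n); simpl; f_equal; ring.
Qed.

Lemma pT_kcons_S (n : nat) :
  pT p1 p2 x (kcons k pi) (S n) = s * pT p1 p2 y pi n.
Proof.
  unfold pT. change (kcons k pi (S n)) with (pi n).
  rewrite st_kcons_S. destruct (pi n); simpl; ring.
Qed.

Lemma survival_kcons_S (n : nat) :
  survival x (kcons k pi) (S n) = s * survival y pi n.
Proof. unfold survival. rewrite st_kcons_S. simpl. ring. Qed.

Lemma pT_kcons_0 : pT p1 p2 x (kcons k pi) 0 = 1 - s.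
Proof.
  pose proof (survival_S x (kcons k pi) 0) as H.
  rewrite survival_kcons_S, !survival_0 in H. lra.
Qed.

(* The mass 1 - s finishing at the first knock and the mass
   s * (1 - survival) finishing later both pay the delay [dur c k]. *)
Lemma cost_sum_kcons_S (N : nat) :
  cost_sum x (kcons k pi) (S N)
  = (dur c k - s * dur c k * survival y pi (S N)) + s * cost_sum y pi N.
Proof.
  unfold cost_sum. induction N as [|N IH].
  - simpl sum_f_R0. rewrite pT_kcons_S, Dn_kcons_S, pT_kcons_0, survival_S, survival_0.
    change (Dn c (kcons k pi) 0) with (dur c k). ring.
  - change (sum_f_R0 ?f (S (S N))) with (sum_f_R0 f (S N) + f (S (S N))).
    rewrite IH, pT_kcons_S, Dn_kcons_S, (survival_S y pi (S N)). simpl sum_f_R0. ring.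
Qed.

Lemma Ex_kcons : semifrac pi -> 0 <= y <= 1 -> 0 < s ->
  Ex p1 p2 c x (kcons k pi) = Rbar_plus (dur c k) (Rbar_mult s (Ex p1 p2 c y pi)).
Proof.
  intros Hpi Hy Hs.
  destruct (survival_cvg y pi Hy Hpi) as [L [HL0 HL]].
  destruct (cost_sum_cvg y pi Hy Hpi) as [HA HA0].
  set (A := Lim_seq (cost_sum y pi)) in HA, HA0.
  set (d := dur c k).
  assert (Hcost : Lim_seq (cost_sum x (kcons k pi))
                  = Rbar_plus (d - s * d * L) (Rbar_mult s A)).
  { rewrite <- Lim_seq_incr_1. apply is_lim_seq_unique.
    apply (is_lim_seq_ext (fun N => (d - s * d * survival y pi (S N)) + s * cost_sum y pi N)).
    { intros N. symmetry. apply cost_sum_kcons_S. }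
    apply is_lim_seq_plus with (l1 := Finite (d - s * d * L)) (l2 := Rbar_mult s A).
    - apply is_lim_seq_minus'; [apply is_lim_seq_const|].
      apply (is_lim_seq_scal_l _ (s * d) (Finite L)).
      now apply (is_lim_seq_incr_1 (survival y pi)).
    - now apply is_lim_seq_scal_l.
    - apply Rbar_plus_correct. now destruct (Rbar_mult s A). }
  assert (Hsurv : Lim_seq (survival x (kcons k pi)) = s * L).
  { rewrite <- Lim_seq_incr_1.
    rewrite (Lim_seq_ext _ (fun n => s * survival y pi n)) by apply survival_kcons_S.
    now rewrite Lim_seq_scal_l, (is_lim_seq_unique _ _ HL). }
  rewrite !Ex_survival_cost_sum, Hcost, Hsurv, (is_lim_seq_unique _ _ HL).
  now apply Rbar_plus_scaled_tail.
Qed.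

End FirstKnock.

End Shift.

Theorem mainTheorem12 (p1 p2 c : R)
  (hp1 : 0 < p1 < 1) (hp2 : 0 < p2 < 1) (hc : 0 < c) :
  forall x : R, 0 <= x <= 1 ->
  forall pi : kseq, semifrac pi ->
    (forall t : R, 0 <= t ->
       Ex p1 p2 c x (kcons (K1 t) pi)
       = Rbar_plus t (Ex p1 p2 c (Rpower (1 - p1) t * x) pi))
    /\
    (let y := x / ((1 - p2) + p2 * x) in
       Ex p1 p2 c x (kcons K2 pi)
       = Rbar_plus c (Rbar_mult ((1 - p2) + p2 * x) (Ex p1 p2 c y pi))).
Proof.
  intros x Hx pi Hpi. split.
  - intros t Ht.
    pose proof (Rpower_unit_interval (1 - p1) t ltac:(lra) Ht) as Hq.
    rewrite <- (Rbar_mult_1_l (Ex p1 p2 c _ pi)).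
    apply (Ex_kcons p1 p2 c ltac:(lra) ltac:(lra) ltac:(lra)); [|exact Hpi|nra|lra].
    simpl. f_equal; ring.
  - intros y. assert (Hs : 0 < 1 - p2 + p2 * x) by nra.
    apply (Ex_kcons p1 p2 c ltac:(lra) ltac:(lra) ltac:(lra)); [|exact Hpi| |exact Hs].
    + simpl. unfold y. f_equal; field; lra.
    + unfold y. split; [apply Rdiv_le_0_compat; lra|].
      apply Rmult_le_reg_r with (1 - p2 + p2 * x); [exact Hs|].
      unfold Rdiv. rewrite Rmult_assoc, Rinv_l by lra. nra.
Qed.
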